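(* Let $Y$ be a relation variable of type $\{(\mathtt n,\mathtt n)\}$ and $U$ a function variable of type $\emptyset\to\mathtt n$. Then there are an arithmetical $\mathsf{FO{+}C}$-formula $\mathrm{s\text{-}itadd}$ and an arithmetical $\mathsf{FO{+}C}$-term $\mathrm{bd\text{-}s\text{-}itadd}$ (both possibly using $Y$ and $U$) such that for all numerical assignments $\mathfrak a$, $$\Big\langle \mathrm{s\text{-}itadd},\mathrm{bd\text{-}s\text{-}itadd}\Big\rangle^{\mathfrak a}=\sum_{i<\mathfrak a(U)}\langle Y,U\rangle^{\mathfrak a}(i).$$
   Context: $\mathsf{FO{+}C}$ is two-sorted first-order logic with counting: vertex variables range over the universe of a finite structure, number variables over $\mathbb N$. Terms: number variables, $0$, $1$, $\theta+\theta'$, $\theta\cdot\theta'$, terms $U(\xi_1,\dots,\xi_k)$ for function variables $U$, and counting terms $\#(x_1,\dots,x_k,y_1<\theta_1,\dots,y_\ell<\theta_\ell).\varphi$ (value: the number of tuples $(a_1..a_k,b_1..b_\ell)$, $a_i$ vertices, $b_i\in\mathbb N$, with each $b_i$ below the value of $\theta_i$ under the assignment extended by $x\mapsto a$, $y_1..y_{i-1}\mapsto b_1..b_{i-1}$, satisfying $\varphi$ under the assignment extended by all of them). Formulas: $\theta\le\theta'$, $x=x'$, relational atoms, atoms $X(\xi_1,\dots,\xi_k)$ for relation variables $X$, $\neg$, $\wedge$. Relation and function variables have types: a relation variable of type $\{(t_1,\dots,t_k)\}$ ($t_i\in\{\mathtt v,\mathtt n\}$) is interpreted by a subset of the corresponding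 product of universe/$\mathbb N$; a function variable of type $(t_1..t_k)\to\mathtt n$ by a function from that product to $\mathbb N$; in atoms $X(\xi_1..\xi_k)$ and terms $U(\xi_1..\xi_k)$, $\xi_i$ is a vertex variable if $t_i=\mathtt v$ and a term if $t_i=\mathtt n$. There is no quantification over relation/function variables. An expression is arithmetical if it contains no vertex variables; its value then depends only on a numerical assignment $\mathfrak a$ (values of number variables and of relation/function variables of purely numerical type). For a $0$-ary function variable write $\mathfrak a(U)$ for its value. Notation: $\langle Y,U\rangle^{\mathfrak a}(i)=\sum\{2^j: (j,i)\in\mathfrak a(Y),\ j<\mathfrak a(U)\}$. For a fixed distinguished number variable $\hat y$, a formula $\chi$ and a term $\theta$, $\langle\chi,\theta\rangle^{\mathfrak a}=\sum\{2^i: i<\text{value of }\theta\text{ under }\mathfrak a,\ \chi\text{ holds under }\mathfrak a\text{ modified to }\hat y\mapsto i\}$. *)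

From mathcomp Require Import all_boot.
Set Implicit Arguments. Unset Strict Implicit. Unset Printing Implicit Defensive.

(* A relation/function variable is identified by its name
   together with its arity (number of arguments); all argument positions are
   of numerical type n (arithmetical expressions contain no vertex variables). *)
Inductive term : Type :=
  | TVar   : nat -> term
  | TZero  : term
  | TOne   : term
  | TAdd   : term -> term -> term
  | TMul   : term -> term -> term
  | TFun   : nat -> tlist -> term
  | TCount : blist -> form -> term         (* #(y_1<theta_1,...,y_l<theta_l).phi *)
with form : Type :=
  | FLe  : term -> term -> form
  | FRel : nat -> tlist -> form
  | FNot : form -> form
  | FAnd : form -> form -> form
with tlist : Type :=
  | TNil  : tlist
  | TCons : term -> tlist -> tlist
with blist : Type :=
  | BNil  : blist
  | BCons : nat -> term -> blist -> blist.

(* Numerical assignment: values of number variables, of relation variables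
   (name, arity) as subsets of N^arity (given by characteristic functions on
   argument lists of that length) and of function variables (name, arity). *)
Record assignment := Assignment {
  nv : nat -> nat;
  rv : nat -> nat -> seq nat -> bool;
  fv : nat -> nat -> seq nat -> nat }.

Definition upd (a : assignment) (y b : nat) : assignment :=
  Assignment (fun z => if z == y then b else nv a z) (rv a) (fv a).

Fixpoint evalT (a : assignment) (t : term) {struct t} : nat :=
  match t with
  | TVar y => nv a y
  | TZero => 0
  | TOne => 1
  | TAdd t1 t2 => evalT a t1 + evalT a t2
  | TMul t1 t2 => evalT a t1 * evalT a t2
  | TFun f args => let s := evalL a args in fv a f (size s) s
  | TCount bs phi =>
      (fix cnt (a : assignment) (bs : blist) {struct bs} : nat :=
         match bs with
         | BNil => if evalF a phi then 1 else 0
         | BCons y th bs' =>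
             sumn (map (fun b => cnt (upd a y b) bs') (iota 0 (evalT a th)))
         end) a bs
  end
with evalF (a : assignment) (f : form) {struct f} : bool :=
  match f with
  | FLe t1 t2 => evalT a t1 <= evalT a t2
  | FRel r args => let s := evalL a args in rv a r (size s) s
  | FNot g => ~~ evalF a g
  | FAnd g h => evalF a g && evalF a h
  end
with evalL (a : assignment) (l : tlist) {struct l} : seq nat :=
  match l with
  | TNil => [::]
  | TCons t l' => evalT a t :: evalL a l'
  end.

(* Fixed names: the distinguished number variable y-hat, the relation
   variable Y of type {(n,n)} and the 0-ary function variable U. *)
Definition yhat : nat := 0.
Definition Yname : nat := 0.
Definition Uname : nat := 0.

Definition valU (a : assignment) : nat := fv a Uname 0 [::].

Definition YU (a : assignment) (i : nat) : nat :=
  \sum_(j < valU a | rv a Yname 2 [:: (j : nat); i]) 2 ^ j.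

Definition bitval (a : assignment) (chi : form) (theta : term) : nat :=
  \sum_(i < evalT a theta | evalF (upd a yhat i) chi) 2 ^ i.

(* Write S = sum_i <Y,U>(i) as sum_j c_j 2^j, where c_j <= U counts the i with
   (j, i) in Y.  Cut the binary positions into blocks of L bits, with
   U <= W = 2^L <= 2U + 2.  The block sums d_b = sum_(r < L) c_(bL+r) 2^r are below
   W^2, hence polynomially bounded and given by counting terms, and
   S = sum_b d_b W^b.  Moving the high base-W digit of each d_b one block up gives
   S = sum_b z_b W^b with z_b = d_b mod W + d_(b-1) div W < 2W - 1, so a carry is
   at most one unit and is first-order definable by carry lookahead: a carry
   enters block b iff some k < b has z_k >= W and every l strictly between k and b
   has z_l = W - 1.  The base-W digit of S at b is (z_b + carry_b) mod W, and bit
   y of S is bit (y mod L) of the digit at y div L.  Powers of two are the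
   positive numbers without odd divisors > 1, and p = 2^e iff moreover e powers of
   two lie below p. *)

From mathcomp Require Import all_boot zify.
From Stdlib Require Import FunctionalExtensionality.
Set Implicit Arguments. Unset Strict Implicit. Unset Printing Implicit Defensive.

(** * Binary arithmetic *)

Lemma sum_ltn n k : \sum_(v < n) (v < k) = minn n k.
Proof.
elim: n => [|n IH]; first by rewrite big_ord0 min0n.
by rewrite big_ord_recr /= IH; case: (ltnP n k) => /=; lia.
Qed.

Lemma sum_exp2_lt n : \sum_(i < n) 2 ^ i < 2 ^ n.
Proof.
elim: n => [|n IH]; first by rewrite big_ord0.
by rewrite big_ord_recr /= expnS mul2n -addnn ltn_add2r.
Qed.

Lemma sum_ord_mul N L (F : nat -> nat) :
  \sum_(j < N * L) F j = \sum_(b < N) \sum_(r < L) F (b * L + r).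
Proof.
elim: N => [|N IH]; first by rewrite mul0n !big_ord0.
by rewrite mulSnr big_split_ord /= IH big_ord_recr.
Qed.

Lemma binary_expansion m n : n < 2 ^ m -> \sum_(i < m | odd (n %/ 2 ^ i)) 2 ^ i = n.
Proof.
elim: m n => [|m IH] n n_lt; first by rewrite big_ord0; case: n n_lt.
rewrite big_mkcond big_ord_recl /= expn0 divn1.
under eq_bigr => i _ do
  rewrite /bump add1n expnS divnMA -[0](muln0 2) -fun_if.
rewrite -big_distrr -big_mkcond IH; last by rewrite ltn_divLR // -expnSr.
by rewrite /= [RHS](divn_eq n 2) modn2 addnC mulnC; case: (odd n).
Qed.

Lemma odd_div_exp2_mod L r n : r < L -> odd ((n %% 2 ^ L) %/ 2 ^ r) = odd (n %/ 2 ^ r).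
Proof.
move=> lt_rL; have split_L : 2 ^ L = 2 ^ (L - r) * 2 ^ r by rewrite -expnD subnK // ltnW.
rewrite [in RHS](divn_eq n (2 ^ L)) [in X in _ * X]split_L mulnA divnMDl ?expn_gt0 //.
by rewrite oddD oddM oddX subn_eq0 leqNgt lt_rL andbF.
Qed.

Lemma exp2_lognE n :
  (n == 2 ^ logn 2 n) = (0 < n) && all (fun d => (d %| n) && odd d ==> (d <= 1)) (iota 0 n.+1).
Proof.
apply/eqP/andP => [->|[n_gt0 /allP odd_dvd]].
  split; rewrite ?expn_gt0 //; apply/allP => d _; apply/implyP => /andP[dvd_d odd_d].
  have : coprime d (2 ^ logn 2 n) by rewrite coprimeXr // coprimen2.
  by rewrite /coprime (gcdn_idPl dvd_d) => /eqP->.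
have [m m_odd def_n] := pfactor_coprime (isT : prime 2) n_gt0.
rewrite coprime2n in m_odd.
have m_dvd : m %| n by rewrite def_n dvdn_mulr.
have : m <= 1.
  apply: (implyP (odd_dvd m _)); last by rewrite m_dvd m_odd.
  by rewrite mem_iota /= add0n ltnS dvdn_leq.
move=> le_m1; have m_eq1 : m = 1 by case: m m_odd le_m1 {def_n m_dvd} => [|[|]].
by rewrite {1}def_n m_eq1 mul1n.
Qed.

Lemma sum_eq_exp2_logn k : \sum_(v < 2 ^ k) (v == 2 ^ logn 2 v :> nat) = k.
Proof.
elim: k => [|k IH]; first by rewrite expn0 big_ord1.
have big_natE n : \sum_(v < n) (v == 2 ^ logn 2 v :> nat) = \sum_(0 <= v < n) (v == 2 ^ logn 2 v).
  by rewrite big_mkord.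
rewrite big_natE in IH; rewrite big_natE.
rewrite (@big_cat_nat _ _ _ (2 ^ k)) ?leq_exp2l //= IH big_ltn ?ltn_exp2l //.
rewrite pfactorK // eqxx big1_seq ?addn0 ?addn1 // => v; rewrite mem_index_iota.
move=> /and3P[_ lt_kv lt_vk]; case: eqP => // v_eq.
by move: lt_kv lt_vk; rewrite v_eq !ltn_exp2l //; lia.
Qed.

Lemma has_eq_iota n c (P : pred nat) :
  has (fun v => (v == c) && P v) (iota 0 n) = (c < n) && P c.
Proof.
apply/hasP/andP => [[v] | [lt_cn Pc]]; first by rewrite mem_iota => /andP[_ lt_vn] /andP[/eqP <-].
by exists c; rewrite ?mem_iota ?eqxx.
Qed.

Lemma has_divn_modn y L (P : nat -> nat -> bool) : 0 < L ->
  has (fun b => has (fun r => (y == b * L + r) && P b r) (iota 0 L)) (iota 0 y.+1) =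
  P (y %/ L) (y %% L).
Proof.
move=> L_gt0; apply/hasP/idP => [[b _ /hasP[r]]|P_y].
  rewrite mem_iota /= => lt_rL /andP[/eqP-> Pbr].
  by rewrite divnMDl // modnMDl (divn_small lt_rL) (modn_small lt_rL) addn0.
exists (y %/ L); first by rewrite mem_iota ltnS leq_div.
apply/hasP; exists (y %% L); first by rewrite mem_iota /= ltn_pmod.
by rewrite -divn_eq eqxx.
Qed.

Section CarryLookahead.

Variables (W : nat) (W_gt0 : 0 < W).

Definition carry (z : nat -> nat) (b : nat) : bool :=
  has (fun k => (W <= z k) && all (fun l => (k < l) ==> (z l + 1 == W)) (iota 0 b))
    (iota 0 b).

Lemma carryS z b : carry z b.+1 = (W <= z b) || carry z b && (z b + 1 == W).
Proof.
rewrite /carry; have -> : iota 0 b.+1 = iota 0 b ++ [:: b] by rewrite -addn1 iotaD.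
rewrite has_cat /= orbF all_cat /= ltnn andbT orbC; congr orb.
  rewrite [all _ _](_ : _ = true) /= ?andbT //.
  by apply/allP => l; rewrite mem_iota => /andP[_ lt_lb]; rewrite ltnNge ltnW.
have [zbW|zbW] := boolP (z b + 1 == W); rewrite ?andbT ?andbF.
  apply: eq_in_has => k; rewrite mem_iota add0n => /andP[_ lt_kb].
  by rewrite all_cat /= lt_kb zbW !andbT.
apply/hasPn => k; rewrite mem_iota add0n => /andP[_ lt_kb].
by rewrite all_cat /= lt_kb (negbTE zbW) !andbF.
Qed.

Lemma sum_carry (z : nat -> nat) N : (forall b, z b + 1 < 2 * W) ->
  \sum_(b < N) z b * W ^ b =
  \sum_(b < N) (z b + carry z b) %% W * W ^ b + carry z N * W ^ N.
Proof.
move=> z_lt; elim: N => [|N IH]; first by rewrite !big_ord0.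
rewrite !big_ord_recr /= IH -!addnA; congr (_ + _).
have {}z_lt := z_lt N.
rewrite carryS [in RHS]expnS mulnA -mulnDl.
have -> : (W <= z N) || carry z N && (z N + 1 == W) = (W <= z N + carry z N).
  by case: (carry z N) z_lt => /=; lia.
rewrite -mulnDl addnC; congr (_ * _).
have : z N + carry z N < 2 * W by case: (carry z N) z_lt => /=; lia.
move: (z N + carry z N) => x lt_x2W.
case: (leqP W x) => [le_Wx|lt_xW]; last by rewrite mul0n addn0 modn_small.
by rewrite mul1n -[in RHS](subnK le_Wx) modnDr modn_small; lia.
Qed.

Definition regroup (d : nat -> nat) (b : nat) : nat :=
  d b %% W + (if b is b'.+1 then d b' %/ W else 0).

Lemma sum_regroup (d : nat -> nat) N :
  \sum_(b < N.+1) d b * W ^ b =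
  \sum_(b < N.+1) regroup d b * W ^ b + d N %/ W * W ^ N.+1.
Proof.
elim: N => [|N IH]; first by rewrite !big_ord1 /regroup /= expn0 expn1 {1}(divn_eq (d 0) W); lia.
rewrite big_ord_recr IH [in RHS]big_ord_recr /= -!addnA; congr (_ + _).
by rewrite /regroup {1}(divn_eq (d N.+1) W) [W ^ N.+2]expnS; lia.
Qed.

Lemma digit_sum (s : nat -> nat) X N q : (forall b, s b < W) -> q < N ->
  (\sum_(b < N) s b * W ^ b + X * W ^ N) %/ W ^ q %% W = s q.
Proof.
elim: N s q => [|N IH] s q s_lt // lt_qN.
rewrite big_ord_recl /= expn0 muln1 -addnA.
under eq_bigr => b _ do rewrite /bump add1n expnS mulnCA.
rewrite expnS mulnCA -big_distrr -mulnDr /= addnC mulnC.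
case: q lt_qN => [|q] lt_qN; first by rewrite expn0 divn1 modnMDl modn_small.
rewrite expnS divnMA divnMDl // (divn_small (s_lt 0)) addn0.
exact: (IH (fun b => s b.+1)).
Qed.

Definition lookahead_digit (d : nat -> nat) (q : nat) : nat :=
  (regroup d q + carry (regroup d) q) %% W.

Theorem digit_carry_lookahead (d : nat -> nat) N q :
  (forall b, d b < W * W) -> q < N ->
  (\sum_(b < N) d b * W ^ b) %/ W ^ q %% W = lookahead_digit d q.
Proof.
move=> d_lt lt_qN; case: N lt_qN => [//|N] lt_qN.
have regroup_lt b : regroup d b + 1 < 2 * W.
  have := ltn_pmod (d b) W_gt0; rewrite /regroup.
  case: b => [|b]; first by lia.
  by have := d_lt b; rewrite -ltn_divLR //; lia.
rewrite sum_regroup (sum_carry N.+1 regroup_lt) -addnA -mulnDl.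
rewrite (digit_sum (s := fun b => (regroup d b + carry (regroup d) b) %% W)) //.
by move=> b; rewrite ltn_pmod.
Qed.

End CarryLookahead.

Section IteratedAddition.

Variables (U : nat) (Y : nat -> nat -> bool).

Definition itsum : nat := \sum_(i < U) \sum_(j < U | Y j i) 2 ^ j.

Definition colsum (j : nat) : nat := \sum_(i < U) (Y j i && (j < U)).

Lemma colsum_le j : colsum j <= U.
Proof. by rewrite -[U in X in _ <= X]card_ord -sum1_card leq_sum // => i _; exact: leq_b1. Qed.

Lemma colsum_eq0 j : U <= j -> colsum j = 0.
Proof. by move=> le_Uj; rewrite /colsum big1 // => i _; rewrite ltnNge le_Uj andbF. Qed.

Lemma itsum_colsum : itsum = \sum_(j < U) colsum j * 2 ^ j.
Proof.
rewrite /itsum; under eq_bigr => i _ do rewrite big_mkcond /=.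
rewrite exchange_big; apply: eq_bigr => j _; rewrite /colsum big_distrl.
by apply: eq_bigr => i _; rewrite /= ltn_ord andbT; case: (Y j i); rewrite ?mul1n.
Qed.

Lemma itsum_lt : itsum < 2 ^ (U + U).
Proof.
have le_itsum : itsum <= U * \sum_(j < U) 2 ^ j.
  by rewrite itsum_colsum big_distrr leq_sum // => j _; rewrite leq_mul2r colsum_le orbT.
have := sum_exp2_lt U; have := ltn_expl U (isT : 1 < 2).
by rewrite expnD; move: itsum (\sum_(j < U) 2 ^ j) (2 ^ U) le_itsum => S s P; nia.
Qed.

Variable L : nat.

Definition block (b : nat) : nat := \sum_(r < L) colsum (b * L + r) * 2 ^ r.

Lemma itsum_blocks N : 0 < L -> U <= N -> itsum = \sum_(b < N) block b * (2 ^ L) ^ b.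
Proof.
move=> L_gt0 le_UN; have le_U_NL : U <= N * L by rewrite (leq_trans le_UN) ?leq_pmulr.
rewrite itsum_colsum (big_ord_widen _ (fun j => colsum j * 2 ^ j) le_U_NL) big_mkcond /=.
rewrite (sum_ord_mul N L (fun j => if j < U then colsum j * 2 ^ j else 0)).
apply: eq_bigr => b _; rewrite /block big_distrl; apply: eq_bigr => r _ /=.
rewrite -expnM -mulnA -expnD mulnC addnC; case: ltnP => // le_U; by rewrite colsum_eq0.
Qed.

Lemma block_lt b : U <= 2 ^ L -> block b < 2 ^ L * 2 ^ L.
Proof.
move=> le_U_2L; have le_block : block b <= U * \sum_(r < L) 2 ^ r.
  by rewrite big_distrr leq_sum // => r _; rewrite leq_mul2r colsum_le orbT.
have := sum_exp2_lt L; have := expn_gt0 2 L.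
by move: (block b) (\sum_(r < L) 2 ^ r) (2 ^ L) le_block le_U_2L => B s P; nia.
Qed.

Lemma odd_itsum_div y : 0 < L -> U <= 2 ^ L ->
  odd (itsum %/ 2 ^ y) = odd (lookahead_digit (2 ^ L) block (y %/ L) %/ 2 ^ (y %% L)).
Proof.
move=> L_gt0 le_U_2L.
have lt_yL_N : y %/ L < U + y.+1 by rewrite ltn_addl // ltnS leq_div.
have -> : 2 ^ y = (2 ^ L) ^ (y %/ L) * 2 ^ (y %% L).
  by rewrite -expnM -expnD mulnC -divn_eq.
rewrite (@itsum_blocks (U + y.+1)) ?leq_addr // divnMA.
rewrite -(odd_div_exp2_mod _ (ltn_pmod y L_gt0)) digit_carry_lookahead ?expn_gt0 //.
by move=> b; apply: block_lt.
Qed.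

End IteratedAddition.

Lemma exists_blocklen U : exists L, [/\ 0 < L, U <= 2 ^ L & 2 ^ L < U + U + 3].
Proof.
elim: U => [|U [L [L_gt0 le_U lt_U]]]; first by exists 1.
case: (ltnP U (2 ^ L)) => [lt_U2L|le_2LU]; first by exists L; split; lia.
by exists L.+1; rewrite expnS; split; lia.
Qed.

(** * Evaluation of derived connectives *)

Lemma sumn_iota (F : nat -> nat) n : sumn (map F (iota 0 n)) = \sum_(v < n) F v.
Proof. by rewrite sumnE big_map -(big_mkord xpredT) /index_iota subn0. Qed.

Lemma sum_nat_of_bool (P : pred nat) n : \sum_(v < n) P v = count P (iota 0 n).
Proof.
by rewrite -sum1_count -[n in iota 0 n]subn0 -/(index_iota 0 n) big_mkord [RHS]big_mkcond.
Qed.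

Lemma upd_upd a z v w : upd (upd a z v) z w = upd a z w.
Proof.
congr Assignment; apply: functional_extensionality => y /=.
by case: (y == z).
Qed.

Lemma nv_upd a z v y : nv (upd a z v) y = if y == z then v else nv a y.
Proof. by []. Qed.

Lemma nv_upd_eq a z v : nv (upd a z v) z = v.
Proof. by rewrite nv_upd eqxx. Qed.

Lemma nv_upd_neq a z v y : y != z -> nv (upd a z v) y = nv a y.
Proof. by rewrite nv_upd => /negbTE->. Qed.

Lemma nv_upd_gt a z v y : z < y -> nv (upd a z v) y = nv a y.
Proof. by move=> lt_zy; rewrite nv_upd gtn_eqF. Qed.

Lemma eqn_gtF x m z : m < x -> z <= m -> (x == z) = false.
Proof. by move=> lt_mx le_zm; apply/gtn_eqF/(leq_ltn_trans le_zm). Qed.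

Lemma evalT_TVar a y : evalT a (TVar y) = nv a y.
Proof. by []. Qed.

Lemma evalT_TAdd a t1 t2 : evalT a (TAdd t1 t2) = evalT a t1 + evalT a t2.
Proof. by []. Qed.

Lemma evalT_TMul a t1 t2 : evalT a (TMul t1 t2) = evalT a t1 * evalT a t2.
Proof. by []. Qed.

Lemma evalT_TCount_nil a phi : evalT a (TCount BNil phi) = evalF a phi.
Proof. by []. Qed.

Lemma evalT_TCount_cons a y th bs phi :
  evalT a (TCount (BCons y th bs) phi) =
  \sum_(v < evalT a th) evalT (upd a y v) (TCount bs phi).
Proof. by rewrite /= sumn_iota. Qed.

Lemma evalF_FLe a t1 t2 : evalF a (FLe t1 t2) = (evalT a t1 <= evalT a t2).
Proof. by []. Qed.

Lemma evalF_FAnd a f g : evalF a (FAnd f g) = evalF a f && evalF a g.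
Proof. by []. Qed.

Definition indepT (a : assignment) (z : nat) (t : term) : Prop :=
  forall v, evalT (upd a z v) t = evalT a t.

Lemma indepT_upd a z v t : indepT a z t -> indepT (upd a z v) z t.
Proof. by move=> t_indep w; rewrite upd_upd !t_indep. Qed.

Lemma indepT_var a z y : z < y -> indepT a z (TVar y).
Proof. by move=> lt_zy v; rewrite !evalT_TVar nv_upd_gt. Qed.

Definition TCount1 (z : nat) (th : term) (phi : form) : term := TCount (BCons z th BNil) phi.
Definition FEq (t1 t2 : term) : form := FAnd (FLe t1 t2) (FLe t2 t1).
Definition FLt (t1 t2 : term) : form := FNot (FLe t2 t1).
Definition FImp (f g : form) : form := FNot (FAnd f (FNot g)).
Definition FEx (z : nat) (th : term) (phi : form) : form := FLe TOne (TCount1 z th phi).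
Definition FAll (z : nat) (th : term) (phi : form) : form := FNot (FEx z th (FNot phi)).

Lemma evalT_TCount1 a z th phi :
  evalT a (TCount1 z th phi) = \sum_(v < evalT a th) evalF (upd a z v) phi.
Proof. by rewrite evalT_TCount_cons. Qed.

Lemma evalF_FEq a t1 t2 : evalF a (FEq t1 t2) = (evalT a t1 == evalT a t2).
Proof. by rewrite /= eqn_leq. Qed.

Lemma evalF_FLt a t1 t2 : evalF a (FLt t1 t2) = (evalT a t1 < evalT a t2).
Proof. by rewrite /= ltnNge. Qed.

Lemma evalF_FImp a f g : evalF a (FImp f g) = (evalF a f ==> evalF a g).
Proof. by rewrite /= negb_and negbK implybE. Qed.

Lemma evalF_FEx a z th phi :
  evalF a (FEx z th phi) = has (fun v => evalF (upd a z v) phi) (iota 0 (evalT a th)).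
Proof. by rewrite has_count -sum_nat_of_bool -evalT_TCount1. Qed.

Lemma evalF_FAll a z th phi :
  evalF a (FAll z th phi) = all (fun v => evalF (upd a z v) phi) (iota 0 (evalT a th)).
Proof.
rewrite -[LHS]/(~~ evalF a (FEx z th (FNot phi))) evalF_FEx -all_predC.
by apply: eq_all => v /=; rewrite negbK.
Qed.

Definition TDiv (z : nat) (x m : term) : term :=
  TCount1 z x (FLe (TMul (TAdd (TVar z) TOne) m) x).

Definition TMod (z : nat) (x m : term) : term :=
  TCount1 z m (FLt (TAdd (TVar z) (TMul m (TDiv z x m))) x).

Definition FDvd (w : nat) (d x : term) : form :=
  FEx w (TAdd x TOne) (FEq (TMul (TVar w) d) x).

Definition FOdd (w : nat) (x : term) : form :=
  FEx w (TAdd x TOne) (FEq (TAdd (TAdd (TVar w) (TVar w)) TOne) x).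

Lemma evalT_TDiv a z x m : indepT a z x -> indepT a z m -> 0 < evalT a m ->
  evalT a (TDiv z x m) = evalT a x %/ evalT a m.
Proof.
move=> x_indep m_indep m_gt0; rewrite evalT_TCount1.
under eq_bigr => v _ do rewrite /= x_indep m_indep eqxx -leq_divRL // addn1.
by rewrite sum_ltn; apply/minn_idPr; apply: leq_div.
Qed.

Lemma evalT_TMod a z x m : indepT a z x -> indepT a z m -> 0 < evalT a m ->
  evalT a (TMod z x m) = evalT a x %% evalT a m.
Proof.
move=> x_indep m_indep m_gt0; rewrite evalT_TCount1.
under eq_bigr => v _.
  rewrite evalF_FLt evalT_TAdd evalT_TMul evalT_TVar nv_upd_eq.
  rewrite evalT_TDiv ?m_indep ?x_indep //; try exact: indepT_upd.
  rewrite [X in _ < X](divn_eq (evalT a x) (evalT a m)) [evalT a m * _]mulnC.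
  rewrite [X in _ < X]addnC ltn_add2r.
  over.
by rewrite sum_ltn; apply/minn_idPr/ltnW; rewrite ltn_mod.
Qed.

Lemma evalF_FDvd a w d x : indepT a w d -> indepT a w x ->
  evalF a (FDvd w d x) = (evalT a d %| evalT a x).
Proof.
move=> d_indep x_indep; rewrite evalF_FEx evalT_TAdd addn1.
under eq_has => q do rewrite evalF_FEq evalT_TMul evalT_TVar nv_upd_eq d_indep x_indep.
apply/hasP/idP => [[q _ /eqP <-]|dvd_dx]; first exact: dvdn_mull.
by exists (evalT a x %/ evalT a d); rewrite ?divnK // mem_iota ltnS leq_div.
Qed.

Lemma evalF_FOdd a w x : indepT a w x -> evalF a (FOdd w x) = odd (evalT a x).
Proof.
move=> x_indep; rewrite evalF_FEx evalT_TAdd addn1.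
under eq_has => h do rewrite evalF_FEq !evalT_TAdd evalT_TVar nv_upd_eq x_indep.
apply/hasP/idP => [[h _ /eqP <-]|odd_x]; first by rewrite addn1 /= addnn odd_double.
exists (evalT a x)./2; last by rewrite addnn addn1 -[X in _ == X]odd_double_half odd_x.
by rewrite mem_iota ltnS -divn2 leq_div.
Qed.

(* Gadgets use fixed numbers as bound variables: applied to a variable x, a gadget
   binds only numbers below x, and nested binders are numbered downwards, so a lookup
   of any variable only crosses updates of smaller ones. *)
Definition FPow2 (x : nat) : form :=
  FAnd (FLe TOne (TVar x))
    (FAll 2 (TAdd (TVar x) TOne)
       (FImp (FAnd (FDvd 1 (TVar 2) (TVar x)) (FOdd 1 (TVar 2))) (FLe (TVar 2) TOne))).

Definition FExp2 (p e : nat) : form :=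
  FAnd (FPow2 p) (FEq (TVar e) (TCount1 3 (TVar p) (FPow2 3))).

Lemma evalF_FPow2 a x : 2 < x -> evalF a (FPow2 x) = (nv a x == 2 ^ logn 2 (nv a x)).
Proof.
move=> lt_2x; rewrite exp2_lognE evalF_FAnd evalF_FAll; congr andb.
rewrite evalT_TAdd evalT_TVar addn1; apply: eq_all => d.
rewrite evalF_FImp evalF_FAnd evalF_FDvd ?evalF_FOdd ?evalF_FLe; try by apply: indepT_var; lia.
by rewrite !evalT_TVar !nv_upd eqxx gtn_eqF.
Qed.

Lemma evalF_FExp2 a p e : 3 < p -> evalF a (FExp2 p e) = (nv a p == 2 ^ nv a e).
Proof.
move=> lt_3p; rewrite evalF_FAnd (evalF_FPow2 _ (ltnW lt_3p)) evalF_FEq evalT_TCount1.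
under eq_bigr => q _ do rewrite (evalF_FPow2 _ (isT : 2 < 3)) nv_upd_eq.
rewrite !evalT_TVar.
apply/andP/eqP => [[/eqP p_eq /eqP ->]|->]; first by rewrite [in RHS]p_eq sum_eq_exp2_logn.
by rewrite pfactorK // sum_eq_exp2_logn !eqxx.
Qed.

(** * The formula *)

(* The base W = 2 ^ L and the block length L, above all bound numbers. *)
Definition vW : nat := 20.
Definition vL : nat := 21.

Definition tU : term := TFun Uname TNil.
Definition FY (j i : term) : form := FRel Yname (TCons j (TCons i TNil)).
Definition Yrel (a : assignment) (j i : nat) : bool := rv a Yname 2 [:: j; i].

Lemma evalT_tU a : evalT a tU = valU a.
Proof. by []. Qed.

Lemma evalF_FY a j i : evalF a (FY j i) = Yrel a (evalT a j) (evalT a i).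
Proof. by []. Qed.

Lemma Yrel_upd a z v : Yrel (upd a z v) = Yrel a.
Proof. by []. Qed.

Lemma valU_upd a z v : valU (upd a z v) = valU a.
Proof. by []. Qed.

Definition blocklen (a : assignment) (L : nat) : Prop := nv a vL = L /\ nv a vW = 2 ^ L.

Lemma blocklen_upd a L z v : z < vW -> blocklen a L -> blocklen (upd a z v) L.
Proof. by move=> lt_z; rewrite /blocklen !nv_upd_gt // (ltn_trans lt_z). Qed.

(* Each (r, i) with (x L + r, i) in Y is counted 2 ^ r times, through p = 2 ^ r and k < p. *)
Definition blockT (x : nat) : term :=
  let j := TAdd (TMul (TVar x) (TVar vL)) (TVar 7) in
  TCount (BCons 7 (TVar vL) (BCons 6 (TAdd (TVar vW) TOne)
           (BCons 5 tU (BCons 4 (TVar 6) BNil))))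
    (FAnd (FExp2 6 7) (FAnd (FY j (TVar 5)) (FLt j tU))).

Lemma evalT_blockT a L x : 7 < x -> blocklen a L ->
  evalT a (blockT x) = block (valU a) (Yrel a) L (nv a x).
Proof.
move=> lt_7x [L_eq W_eq]; rewrite evalT_TCount_cons evalT_TVar L_eq; apply: eq_bigr => r _.
rewrite evalT_TCount_cons evalT_TAdd evalT_TVar nv_upd_gt // W_eq.
under eq_bigr => p _.
  rewrite evalT_TCount_cons evalT_tU !valU_upd.
  under eq_bigr => i _.
    rewrite evalT_TCount_cons evalT_TVar nv_upd_gt // nv_upd_eq.
    under eq_bigr => k _.
      rewrite evalT_TCount_nil evalF_FAnd evalF_FExp2 // evalF_FAnd evalF_FY evalF_FLt.
      rewrite !evalT_TAdd evalT_TMul evalT_tU !evalT_TVar !Yrel_upd !valU_upd !nv_upd /=.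
      rewrite !(eqn_gtF lt_7x) // L_eq.
      over.
    rewrite sum_nat_const card_ord.
    over.
  over.
have lt_2r : 2 ^ r < 2 ^ L + 1 by rewrite addn1 ltnS leq_exp2l // ltnW.
rewrite (bigD1 (Ordinal lt_2r)) //= [X in _ + X]big1 ?addn0 => [|p /negbTE ne_p].
  by rewrite /colsum big_distrl; apply: eq_bigr => i _; rewrite eqxx mulnC.
by apply: big1 => i _; rewrite -val_eqE /= in ne_p; rewrite ne_p muln0.
Qed.

Definition block_modT (x : nat) : term := TMod 8 (blockT x) (TVar vW).

Definition block_divT (x : nat) : term := TDiv 8 (blockT x) (TVar vW).

Lemma indepT_blockT a L x : 8 < x -> blocklen a L -> indepT a 8 (blockT x).
Proof.
move=> lt_8x bl v; have lt_7x : 7 < x by lia.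
by rewrite !(evalT_blockT (L := L) lt_7x) ?blocklen_upd // (nv_upd_gt _ _ lt_8x).
Qed.

Lemma evalT_block_modT a L x : 8 < x -> blocklen a L ->
  evalT a (block_modT x) = block (valU a) (Yrel a) L (nv a x) %% 2 ^ L.
Proof.
move=> lt_8x bl; have lt_7x : 7 < x by lia.
rewrite evalT_TMod.
- by rewrite (evalT_blockT lt_7x bl) evalT_TVar bl.2.
- exact: indepT_blockT bl.
- by move=> v.
- by rewrite evalT_TVar bl.2 expn_gt0.
Qed.

Lemma evalT_block_divT a L x : 8 < x -> blocklen a L ->
  evalT a (block_divT x) = block (valU a) (Yrel a) L (nv a x) %/ 2 ^ L.
Proof.
move=> lt_8x bl; have lt_7x : 7 < x by lia.
rewrite evalT_TDiv.
- by rewrite (evalT_blockT lt_7x bl) evalT_TVar bl.2.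
- exact: indepT_blockT bl.
- by move=> v.
- by rewrite evalT_TVar bl.2 expn_gt0.
Qed.

Definition prev_divT (x : nat) : term :=
  TCount (BCons 10 (TVar x) (BCons 9 (block_divT 10) BNil)) (FEq (TAdd (TVar 10) TOne) (TVar x)).

Lemma evalT_prev_divT a L x : 10 < x -> blocklen a L ->
  evalT a (prev_divT x) = if nv a x is b.+1 then block (valU a) (Yrel a) L b %/ 2 ^ L else 0.
Proof.
move=> lt_10x bl; rewrite evalT_TCount_cons evalT_TVar.
under eq_bigr => j _.
  rewrite evalT_TCount_cons (evalT_block_divT (L := L) (isT : 8 < 10)) ?blocklen_upd // nv_upd_eq.
  under eq_bigr => t _.
    rewrite evalT_TCount_nil evalF_FEq evalT_TAdd !evalT_TVar !nv_upd /= !(eqn_gtF lt_10x) //.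
    over.
  rewrite sum_nat_const card_ord addn1 !valU_upd !Yrel_upd.
  over.
case: (nv a x) => [|b]; first by rewrite big_ord0.
rewrite big_ord_recr big1 /= ?eqxx ?muln1 // => j _.
by rewrite eqSS ltn_eqF // muln0.
Qed.

Definition regroupT (x : nat) : term := TAdd (block_modT x) (prev_divT x).

Lemma evalT_regroupT a L x : 10 < x -> blocklen a L ->
  evalT a (regroupT x) = regroup (2 ^ L) (block (valU a) (Yrel a) L) (nv a x).
Proof.
move=> lt_10x bl; have lt_8x : 8 < x by lia.
by rewrite evalT_TAdd (evalT_block_modT lt_8x bl) (evalT_prev_divT lt_10x bl).
Qed.

Definition carryF (x : nat) : form :=
  FEx 12 (TVar x)
    (FAnd (FLe (TVar vW) (regroupT 12))
       (FAll 11 (TVar x)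
          (FImp (FLt (TVar 12) (TVar 11)) (FEq (TAdd (regroupT 11) TOne) (TVar vW))))).

Lemma evalF_carryF a L x : 12 < x -> blocklen a L ->
  evalF a (carryF x) = carry (2 ^ L) (regroup (2 ^ L) (block (valU a) (Yrel a) L)) (nv a x).
Proof.
move=> lt_12x bl; rewrite evalF_FEx evalT_TVar; apply: eq_has => k.
rewrite evalF_FAnd evalF_FLe evalF_FAll (evalT_regroupT (L := L) (isT : 10 < 12)) ?blocklen_upd //.
congr andb.
  by rewrite evalT_TVar nv_upd_eq (nv_upd_gt _ _ (isT : 12 < vW)) bl.2 valU_upd Yrel_upd.
rewrite evalT_TVar (nv_upd_gt _ _ lt_12x); apply: eq_all => l.
rewrite evalF_FImp evalF_FLt evalF_FEq evalT_TAdd.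
rewrite (evalT_regroupT (L := L) (isT : 10 < 11)) ?blocklen_upd //.
by rewrite !evalT_TVar !valU_upd !Yrel_upd !nv_upd /= bl.2.
Qed.

Definition digitT (x : nat) : term :=
  TMod 14 (TAdd (regroupT x) (TCount1 13 TOne (carryF x))) (TVar vW).

Lemma evalT_digitT a L x : 14 < x -> blocklen a L ->
  evalT a (digitT x) = lookahead_digit (2 ^ L) (block (valU a) (Yrel a) L) (nv a x).
Proof.
move=> lt_14x bl.
have sum_val a' : blocklen a' L ->
    evalT a' (TAdd (regroupT x) (TCount1 13 TOne (carryF x))) =
    regroup (2 ^ L) (block (valU a') (Yrel a') L) (nv a' x) +
    carry (2 ^ L) (regroup (2 ^ L) (block (valU a') (Yrel a') L)) (nv a' x).
  move=> bl'; have [lt_10x lt_12x lt_13x] : [/\ 10 < x, 12 < x & 13 < x] by split; lia.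
  rewrite evalT_TAdd (evalT_regroupT lt_10x bl') evalT_TCount1 big_ord1.
  rewrite (evalF_carryF (L := L) lt_12x) ?blocklen_upd //.
  by rewrite (nv_upd_gt _ _ lt_13x) valU_upd Yrel_upd.
have W_pos : 0 < evalT a (TVar vW) by rewrite evalT_TVar bl.2 expn_gt0.
rewrite evalT_TMod.
- by rewrite (sum_val _ bl) evalT_TVar bl.2.
- move=> v; rewrite (sum_val _ bl) (sum_val _ (blocklen_upd v (isT : 14 < vW) bl)).
  by rewrite (nv_upd_gt _ _ lt_14x) valU_upd Yrel_upd.
- by move=> v.
- exact: W_pos.
Qed.

Definition bitF : form :=
  FEx 19 (TAdd (TVar yhat) TOne) (FEx 18 (TVar vL)
    (FAnd (FEq (TVar yhat) (TAdd (TMul (TVar 19) (TVar vL)) (TVar 18)))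
       (FEx 17 (TAdd (TVar vW) TOne)
          (FAnd (FExp2 17 18) (FOdd 15 (TDiv 16 (digitT 19) (TVar 17))))))).

Lemma evalT_digit_div a L : blocklen a L -> 0 < nv a 17 ->
  evalT a (TDiv 16 (digitT 19) (TVar 17)) =
  lookahead_digit (2 ^ L) (block (valU a) (Yrel a) L) (nv a 19) %/ nv a 17.
Proof.
move=> bl P_gt0; rewrite evalT_TDiv.
- by rewrite (evalT_digitT (isT : 14 < 19) bl).
- move=> v; rewrite (evalT_digitT (isT : 14 < 19) bl).
  by rewrite (evalT_digitT (isT : 14 < 19) (blocklen_upd v (isT : 16 < vW) bl)).
- by move=> v.
- exact: P_gt0.
Qed.

Lemma evalF_bitF a L : 0 < L -> blocklen a L ->
  evalF a bitF =
  odd (lookahead_digit (2 ^ L) (block (valU a) (Yrel a) L) (nv a yhat %/ L)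
       %/ 2 ^ (nv a yhat %% L)).
Proof.
move=> L_gt0 bl; set d := lookahead_digit _ _.
rewrite evalF_FEx evalT_TAdd evalT_TVar addn1.
rewrite -(has_divn_modn _ (fun b r => odd (d b %/ 2 ^ r)) L_gt0).
apply: eq_has => b; rewrite evalF_FEx evalT_TVar (nv_upd_gt _ _ (isT : 19 < vL)) bl.1.
apply: eq_in_has => r; rewrite mem_iota => /andP[_ lt_rL].
rewrite evalF_FAnd evalF_FEq; congr andb.
  by rewrite !evalT_TAdd evalT_TMul !evalT_TVar !nv_upd /= bl.1.
rewrite evalF_FEx evalT_TAdd evalT_TVar (nv_upd_gt _ _ (isT : 18 < vW)).
rewrite (nv_upd_gt _ _ (isT : 19 < vW)) bl.2.
under eq_has => P do
  rewrite evalF_FAnd (evalF_FExp2 _ _ (isT : 3 < 17)) nv_upd_eq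
    (nv_upd_gt _ _ (isT : 17 < 18)) nv_upd_eq.
have le_2r : 2 ^ r <= 2 ^ L by rewrite leq_exp2l // ltnW.
rewrite has_eq_iota addn1 ltnS le_2r andTb.
set a' := upd (upd (upd a 19 b) 18 r) 17 (2 ^ r).
have bl' : blocklen a' L by do 3 apply: blocklen_upd => //.
have pow_gt0 : 0 < nv a' 17 by rewrite nv_upd_eq expn_gt0.
rewrite evalF_FOdd.
- by rewrite (evalT_digit_div bl' pow_gt0) /a' !valU_upd !Yrel_upd !nv_upd /=.
- move=> v; rewrite (evalT_digit_div bl' pow_gt0).
  by rewrite (evalT_digit_div (blocklen_upd v (isT : 15 < vW) bl')).
Qed.

Definition tBound : term := TAdd (TAdd tU tU) (TAdd TOne (TAdd TOne TOne)).

Definition blocked_bitF : form :=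
  FEx vW tBound
    (FAnd (FExp2 vW vL) (FAnd (FLe TOne (TVar vL)) (FAnd (FLe tU (TVar vW)) bitF))).

Definition itaddF : form := FEx vL tBound blocked_bitF.

Lemma evalF_blocked_bitF a :
  evalF a blocked_bitF =
  [&& 2 ^ nv a vL < valU a + valU a + 3, 0 < nv a vL, valU a <= 2 ^ nv a vL
    & odd (itsum (valU a) (Yrel a) %/ 2 ^ nv a yhat)].
Proof.
rewrite evalF_FEx.
under eq_has => W do
  rewrite evalF_FAnd (evalF_FExp2 _ _ (isT : 3 < vW)) nv_upd_eq (nv_upd_gt _ _ (isT : vW < vL)).
rewrite has_eq_iota; congr andb.
rewrite evalF_FAnd evalF_FLe evalT_TVar (nv_upd_gt _ _ (isT : vW < vL)).
rewrite evalF_FAnd evalF_FLe evalT_tU evalT_TVar nv_upd_eq valU_upd.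
have [-> // | L_gt0] := posnP (nv a vL); have [le_U | //] := boolP (valU a <= 2 ^ nv a vL).
have bl : blocklen (upd a vW (2 ^ nv a vL)) (nv a vL).
  by rewrite /blocklen (nv_upd_gt _ _ (isT : vW < vL)) nv_upd_eq.
rewrite (evalF_bitF L_gt0 bl) valU_upd Yrel_upd (nv_upd_neq _ _ (isT : yhat != vW)).
by rewrite -odd_itsum_div.
Qed.

Lemma evalF_itaddF a : evalF a itaddF = odd (itsum (valU a) (Yrel a) %/ 2 ^ nv a yhat).
Proof.
rewrite evalF_FEx; under eq_has => L do
  rewrite evalF_blocked_bitF nv_upd_eq valU_upd Yrel_upd (nv_upd_neq _ _ (isT : yhat != vL)).
apply/hasP/idP => [[L _ /and4P[_ _ _ //]] | bit_y].
have [L [L_gt0 le_U lt_2L]] := exists_blocklen (valU a).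
exists L; last by rewrite lt_2L L_gt0 le_U bit_y.
by rewrite mem_iota /= (ltn_trans (ltn_expl L (isT : 1 < 2)) lt_2L).
Qed.

Theorem lemma3p10 :
  exists (s_itadd : form) (bd_s_itadd : term),
    forall a : assignment,
      bitval a s_itadd bd_s_itadd = \sum_(i < valU a) YU a i.
Proof.
exists itaddF, (TAdd tU tU) => a.
rewrite /bitval evalT_TAdd evalT_tU.
under eq_bigl => y do rewrite evalF_itaddF nv_upd_eq valU_upd Yrel_upd.
exact: binary_expansion (itsum_lt _ _).
Qed.
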